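(* Let $p,q\ge 2$ be relatively prime integers. Then $$p\sum_{n=1}^{q-1}\cot\!\Big(\frac{\pi np}{q}\Big)\cot^3\!\Big(\frac{\pi n}{q}\Big)+q\sum_{n=1}^{p-1}\cot\!\Big(\frac{\pi nq}{p}\Big)\cot^3\!\Big(\frac{\pi n}{p}\Big)=\frac{1}{45}\left(p^4+q^4-5p^2q^2-15p^2-15q^2+45pq-12\right).$$ *)

From Stdlib Require Import Reals ZArith Znumtheory.
Open Scope R_scope.

Definition cot (x : R) : R := cos x / sin x.

Fixpoint sum1 (f : nat -> R) (m : nat) : R :=
  match m with
  | O => 0
  | S k => sum1 f k + f (S k)
  end.

From Stdlib Require Import Reals ZArith Znumtheory Lra Lia.
Open Scope R_scope.

(* By the cotangent multiplication formula sum_{m<p} cot(t + pi m/p) = p cot(p t),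
   p * sum_n cot(pi n p/q) f(cot(pi n/q)) equals sum_n cot(pi n/q) f(cot(pi n/q)) plus a
   double sum over 1 <= n < q, 1 <= m < p of cot(pi n/q + pi m/p) f(cot(pi n/q)).  Adding the
   same identity with p and q exchanged attaches f(cot(pi n/q)) + f(cot(pi m/p)) to each mixed
   term, and cot(a+b)(cot a + cot b) = cot a cot b - 1 eliminates the mixed cotangent as soon
   as f(x) + f(y) is divisible by x + y.  For f(x) = x^3 the sum becomes a polynomial in the
   power sums s_k(q) = sum_n cot^k(pi n/q), whose odd members vanish by symmetry.  Finally s_2
   and s_4 are evaluated by induction on q, using the same reciprocity for the coprime pair
   (q+1, q), where cot(pi n (q+1)/q) = cot(pi n/q) and cot(pi m q/(q+1)) = -cot(pi m/(q+1)). *)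

Fixpoint sum0 (f : nat -> R) (N : nat) : R :=
  match N with O => 0 | S k => sum0 f k + f k end.

Lemma sum0_ext f g N : (forall k, (k < N)%nat -> f k = g k) -> sum0 f N = sum0 g N.
Proof.
  induction N as [|N IH]; intros H; simpl; [reflexivity|].
  rewrite IH by (intros; apply H; lia). rewrite H by lia. reflexivity.
Qed.

Lemma sum0_plus f g N : sum0 (fun k => f k + g k) N = sum0 f N + sum0 g N.
Proof. induction N as [|N IH]; simpl; [lra | rewrite IH; lra]. Qed.

Lemma sum0_scal c f N : sum0 (fun k => c * f k) N = c * sum0 f N.
Proof. induction N as [|N IH]; simpl; [lra | rewrite IH; lra]. Qed.

Lemma sum0_const c N : sum0 (fun _ => c) N = INR N * c.
Proof. induction N as [|N IH]; simpl sum0; [simpl; lra | rewrite IH, S_INR; lra]. Qed.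

Lemma sum0_Sl f N : sum0 f (S N) = f O + sum0 (fun k => f (S k)) N.
Proof. induction N as [|N IH]; simpl in *; [lra | rewrite IH; lra]. Qed.

Lemma sum0_swap (F : nat -> nat -> R) N M :
  sum0 (fun i => sum0 (fun j => F i j) M) N = sum0 (fun j => sum0 (fun i => F i j) N) M.
Proof.
  induction N as [|N IH]; simpl.
  - induction M as [|M IHM]; simpl; [reflexivity | rewrite <- IHM; lra].
  - rewrite IH, <- sum0_plus. reflexivity.
Qed.

Lemma sum0_rev f N : sum0 f N = sum0 (fun k => f (N - S k)%nat) N.
Proof.
  revert f; induction N as [|N IH]; intros f; [reflexivity|].
  rewrite sum0_Sl, IH; simpl sum0. rewrite Nat.sub_diag.
  rewrite (sum0_ext _ (fun k => f (N - k)%nat)) by (intros; f_equal; lia). lra.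
Qed.

Lemma sum1_sum0 f N : sum1 f N = sum0 (fun k => f (S k)) N.
Proof. induction N as [|N IH]; simpl; [reflexivity | rewrite IH; reflexivity]. Qed.

Lemma sum1_ext f g N : (forall k, (1 <= k <= N)%nat -> f k = g k) -> sum1 f N = sum1 g N.
Proof. intros H; rewrite !sum1_sum0; apply sum0_ext; intros; apply H; lia. Qed.

Lemma sum1_plus f g N : sum1 (fun k => f k + g k) N = sum1 f N + sum1 g N.
Proof. rewrite !sum1_sum0; apply sum0_plus. Qed.

Lemma sum1_scal c f N : sum1 (fun k => c * f k) N = c * sum1 f N.
Proof. rewrite !sum1_sum0; apply sum0_scal. Qed.

Lemma sum1_const c N : sum1 (fun _ => c) N = INR N * c.
Proof. rewrite sum1_sum0; apply sum0_const. Qed.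

Lemma sum1_swap (F : nat -> nat -> R) N M :
  sum1 (fun i => sum1 (fun j => F i j) M) N = sum1 (fun j => sum1 (fun i => F i j) N) M.
Proof.
  rewrite !sum1_sum0.
  transitivity (sum0 (fun i => sum0 (fun j => F (S i) (S j)) M) N).
  - apply sum0_ext; intros; apply sum1_sum0.
  - rewrite sum0_swap. apply sum0_ext; intros; symmetry; apply sum1_sum0.
Qed.

Lemma sum1_sum1_plus (F G : nat -> nat -> R) N M :
  sum1 (fun i => sum1 (fun j => F i j + G i j) M) N =
  sum1 (fun i => sum1 (fun j => F i j) M) N + sum1 (fun i => sum1 (fun j => G i j) M) N.
Proof. rewrite <- sum1_plus. apply sum1_ext; intros; apply sum1_plus. Qed.

Lemma sum1_sum1_mul f g N M :
  sum1 (fun i => sum1 (fun j => f i * g j) M) N = sum1 f N * sum1 g M.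
Proof.
  rewrite Rmult_comm, <- sum1_scal. apply sum1_ext; intros.
  rewrite Rmult_comm, <- sum1_scal. apply sum1_ext; intros; ring.
Qed.

Lemma sum1_antisym f N : (forall k, (1 <= k <= N)%nat -> f (S N - k)%nat = - f k) -> sum1 f N = 0.
Proof.
  intros H. rewrite sum1_sum0.
  enough (E : sum0 (fun k => f (S k)) N = -1 * sum0 (fun k => f (S k)) N) by lra.
  rewrite <- sum0_scal, sum0_rev at 1. apply sum0_ext; intros k Hk.
  replace (S (N - S k)) with (S N - S k)%nat by lia. rewrite H by lia. ring.
Qed.

Lemma cot_neg x : cot (- x) = - cot x.
Proof. unfold cot, Rdiv. rewrite sin_neg, cos_neg, Rinv_opp. ring. Qed.

Lemma cot_add_PI x : cot (x + PI) = cot x.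
Proof. unfold cot, Rdiv. rewrite neg_cos, neg_sin, Rinv_opp. ring. Qed.

Lemma cot_add_nat_PI x m : cot (x + INR m * PI) = cot x.
Proof.
  induction m as [|m IH]; [simpl; f_equal; ring|].
  rewrite S_INR, <- IH, <- (cot_add_PI (x + INR m * PI)). f_equal. ring.
Qed.

Lemma sin_add_nat_PI_neq0 x m : sin x <> 0 -> sin (x + INR m * PI) <> 0.
Proof.
  intros H; induction m as [|m IH]; [simpl; rewrite Rmult_0_l, Rplus_0_r; exact H|].
  rewrite S_INR. replace (x + (INR m + 1) * PI) with ((x + INR m * PI) + PI) by ring.
  rewrite neg_sin. intro H'; apply IH; lra.
Qed.

Lemma cot_add a b : sin a <> 0 -> sin b <> 0 -> sin (a + b) <> 0 ->
  cot (a + b) * (cot a + cot b) = cot a * cot b - 1.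
Proof.
  intros Ha Hb Hab. unfold cot.
  replace (cos a / sin a + cos b / sin b) with (sin (a + b) / (sin a * sin b))
    by (rewrite sin_plus; field; auto).
  rewrite cos_plus. field. auto.
Qed.

Lemma sin_PI_div_neq0 k N : (0 < N)%nat -> ~ (Z.of_nat N | Z.of_nat k)%Z ->
  sin (PI * INR k / INR N) <> 0.
Proof.
  intros HN Hd H. apply sin_eq_0_0 in H as [z Hz].
  apply Hd. exists z. apply eq_IZR. rewrite mult_IZR, <- !INR_IZR_INZ.
  assert (0 < INR N) by (apply lt_0_INR; lia). pose proof PI_RGT_0.
  apply Rmult_eq_reg_l with (PI / INR N); [|apply Rgt_not_eq, Rdiv_lt_0_compat; lra].
  replace (PI / INR N * INR k) with (PI * INR k / INR N) by (field; lra). rewrite Hz. field; lra.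
Qed.

Lemma sin_PI_div_lt_neq0 k N : (0 < k < N)%nat -> sin (PI * INR k / INR N) <> 0.
Proof.
  intros Hk. apply sin_PI_div_neq0; [lia|]. intros Hd. apply Z.divide_pos_le in Hd; lia.
Qed.

Lemma sum_cos_arith a b N :
  2 * sin b * sum0 (fun m => cos (a + 2 * b * INR m)) N =
  sin (a + (2 * INR N - 1) * b) - sin (a - b).
Proof.
  induction N as [|N IH]; simpl sum0.
  - rewrite INR_0. replace (a + (2 * 0 - 1) * b) with (a - b) by ring. ring.
  - rewrite Rmult_plus_distr_l, IH, S_INR.
    replace (a + (2 * (INR N + 1) - 1) * b) with ((a + 2 * b * INR N) + b) by ring.
    replace (a + (2 * INR N - 1) * b) with ((a + 2 * b * INR N) - b) by ring.
    rewrite sin_plus, sin_minus. ring.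
Qed.

Lemma sum_cos_roots a j p : (0 < j < p)%nat ->
  sum0 (fun m => cos (a + 2 * (PI * INR j / INR p) * INR m)) p = 0.
Proof.
  intros Hj. set (b := PI * INR j / INR p).
  assert (Hb : sin b <> 0) by exact (sin_PI_div_lt_neq0 j p Hj).
  pose proof (sum_cos_arith a b p) as E.
  replace (a + (2 * INR p - 1) * b) with ((a - b) + 2 * INR j * PI) in E
    by (unfold b; field; apply not_0_INR; lia).
  rewrite sin_period, Rminus_diag in E.
  apply Rmult_integral in E as [E|E]; [exfalso; apply Hb; lra | exact E].
Qed.

Lemma sum_cos_dirichlet u p :
  sin u * sum0 (fun j => cos (2 * INR j * u - INR p * u)) p = sin (INR p * u) * cos u.
Proof.
  pose proof (sum_cos_arith (- (INR p * u)) u p) as E.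
  rewrite (sum0_ext _ (fun j => cos (2 * INR j * u - INR p * u))) in E
    by (intros; f_equal; ring).
  replace (- (INR p * u) + (2 * INR p - 1) * u) with (INR p * u - u) in E by ring.
  replace (- (INR p * u) - u) with (- (INR p * u + u)) in E by ring.
  rewrite sin_neg, sin_minus, sin_plus in E. lra.
Qed.

Lemma cot_expansion u p : sin u <> 0 -> sin (INR p * u) <> 0 ->
  cot u = sum0 (fun j => / sin (INR p * u) * cos (2 * INR j * u - INR p * u)) p.
Proof.
  intros Hu Hpu. rewrite sum0_scal.
  apply (Rmult_eq_reg_l (sin u)); [|exact Hu].
  replace (sin u * (/ sin (INR p * u) * _))
    with (/ sin (INR p * u) * (sin u * sum0 (fun j => cos (2 * INR j * u - INR p * u)) p))
    by ring.
  rewrite sum_cos_dirichlet. unfold cot. field. split; assumption.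
Qed.

Lemma inv_sin_mul_cos_sub x c : sin c <> 0 -> / sin c * cos (x - c) = sin x + cos x * cot c.
Proof. intros Hc. unfold cot. rewrite cos_minus. field. exact Hc. Qed.

Lemma sum_cot_translates th p : (1 <= p)%nat -> sin (INR p * th) <> 0 ->
  (forall m, (m < p)%nat -> sin (th + PI * INR m / INR p) <> 0) ->
  sum0 (fun m => cot (th + PI * INR m / INR p)) p = INR p * cot (INR p * th).
Proof.
  intros Hp Hpth Hm. assert (Hp0 : INR p <> 0) by (apply not_0_INR; lia).
  assert (Hshift : forall m, INR p * (th + PI * INR m / INR p) = INR p * th + INR m * PI)
    by (intros; field; exact Hp0).
  rewrite (sum0_ext _ (fun m => sum0 (fun j => / sin (INR p * th) *
      cos ((2 * INR j * th - INR p * th) + 2 * (PI * INR j / INR p) * INR m)) p)).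
  2:{ intros m Hmp.
      rewrite (cot_expansion _ p) by (auto; rewrite Hshift; apply sin_add_nat_PI_neq0; exact Hpth).
      apply sum0_ext; intros j _.
      rewrite inv_sin_mul_cos_sub by (rewrite Hshift; apply sin_add_nat_PI_neq0; exact Hpth).
      rewrite Hshift, cot_add_nat_PI, <- inv_sin_mul_cos_sub by exact Hpth.
      do 2 f_equal. field. exact Hp0. }
  rewrite sum0_swap. destruct p as [|p]; [lia|]. rewrite sum0_Sl.
  rewrite (sum0_ext (fun j => sum0 _ (S p)) (fun _ => 0)).
  2:{ intros j Hj. rewrite sum0_scal, sum_cos_roots by lia. ring. }
  rewrite (sum0_ext _ (fun _ => / sin (INR (S p) * th) * cos (INR (S p) * th))).
  2:{ intros m _. rewrite INR_0, <- cos_neg. do 2 f_equal. field. exact Hp0. }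
  rewrite !sum0_const. unfold cot. field. exact Hpth.
Qed.

Lemma coprime_not_divide_mul p q n : Z.gcd (Z.of_nat p) (Z.of_nat q) = 1%Z ->
  (1 <= n < q)%nat -> ~ (Z.of_nat q | Z.of_nat p * Z.of_nat n)%Z.
Proof.
  intros Hg Hn Hd. apply Z.gauss in Hd; [|rewrite Z.gcd_comm; exact Hg].
  apply Z.divide_pos_le in Hd; lia.
Qed.

Lemma sin_PI_div_add_neq0 p q n m : Z.gcd (Z.of_nat p) (Z.of_nat q) = 1%Z ->
  (1 <= n < q)%nat -> (m < p)%nat -> sin (PI * INR n / INR q + PI * INR m / INR p) <> 0.
Proof.
  intros Hg Hn Hm.
  replace (PI * INR n / INR q + PI * INR m / INR p) with (PI * INR (n * p + m * q) / INR (p * q)).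
  2:{ rewrite plus_INR, !mult_INR. field. split; apply not_0_INR; lia. }
  apply sin_PI_div_neq0; [nia|]. intros [c Hc]. apply (coprime_not_divide_mul p q n Hg Hn).
  exists (c * Z.of_nat p - Z.of_nat m)%Z. rewrite Nat2Z.inj_add, !Nat2Z.inj_mul in Hc. nia.
Qed.

Lemma sin_mul_PI_div_neq0 p q n : Z.gcd (Z.of_nat p) (Z.of_nat q) = 1%Z ->
  (1 <= n < q)%nat -> sin (INR p * (PI * INR n / INR q)) <> 0.
Proof.
  intros Hg Hn.
  replace (INR p * (PI * INR n / INR q)) with (PI * INR (p * n) / INR q)
    by (rewrite mult_INR; field; apply not_0_INR; lia).
  apply sin_PI_div_neq0; [lia|]. rewrite Nat2Z.inj_mul. exact (coprime_not_divide_mul p q n Hg Hn).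
Qed.

Definition cotq q n := cot (PI * INR n / INR q).

Definition cot_sum p q (f : R -> R) :=
  sum1 (fun n => cot (PI * INR n * INR p / INR q) * f (cotq q n)) (q - 1).

Definition cot_power_sum q k := sum1 (fun n => cotq q n ^ k) (q - 1).

Lemma cotq_sub q n : (1 <= q)%nat -> (n <= q)%nat -> cotq q (q - n) = - cotq q n.
Proof.
  intros Hq Hn. unfold cotq. rewrite minus_INR by exact Hn.
  replace (PI * (INR q - INR n) / INR q) with (- (PI * INR n / INR q) + INR 1 * PI)
    by (simpl; field; apply not_0_INR; lia).
  rewrite cot_add_nat_PI, cot_neg. reflexivity.
Qed.

Lemma cot_power_sum_odd q k : Nat.Odd k -> cot_power_sum q k = 0.
Proof.
  intros [t ->]. destruct (Nat.eq_dec q 0) as [->|Hq]; [reflexivity|]. apply sum1_antisym. intros j Hj.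
  replace (S (q - 1) - j)%nat with (q - j)%nat by lia.
  rewrite cotq_sub by lia. rewrite !pow_add, !pow_mult.
  replace ((- cotq q j) ^ 2) with (cotq q j ^ 2) by ring. ring.
Qed.

Lemma cot_sum_split p q f : Z.gcd (Z.of_nat p) (Z.of_nat q) = 1%Z -> (1 <= p)%nat ->
  INR p * cot_sum p q f =
  sum1 (fun n => cotq q n * f (cotq q n)) (q - 1) +
  sum1 (fun n => sum1 (fun m =>
    cot (PI * INR n / INR q + PI * INR m / INR p) * f (cotq q n)) (p - 1)) (q - 1).
Proof.
  intros Hg Hp. unfold cot_sum. rewrite <- sum1_scal, <- sum1_plus. apply sum1_ext. intros n Hn.
  replace (PI * INR n * INR p / INR q) with (INR p * (PI * INR n / INR q)) by (unfold Rdiv; ring).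
  rewrite <- Rmult_assoc, <- sum_cot_translates.
  2: exact Hp.
  2: apply sin_mul_PI_div_neq0; [exact Hg | lia].
  2: intros m Hm; apply sin_PI_div_add_neq0; [exact Hg | lia | exact Hm].
  replace p with (S (p - 1)) at 1 by lia. rewrite sum0_Sl, sum1_sum0, Rmult_plus_distr_r.
  rewrite INR_0, (Rmult_comm (sum0 _ _)), <- sum0_scal. unfold cotq. f_equal.
  - do 2 f_equal. unfold Rdiv. ring.
  - apply sum0_ext; intros; ring.
Qed.

Lemma cot_sum_reciprocity p q f g : Z.gcd (Z.of_nat p) (Z.of_nat q) = 1%Z ->
  (1 <= p)%nat -> (1 <= q)%nat -> (forall x y, f x + f y = (x + y) * g x y) ->
  INR p * cot_sum p q f + INR q * cot_sum q p f =
  sum1 (fun n => cotq q n * f (cotq q n)) (q - 1) +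
  sum1 (fun m => cotq p m * f (cotq p m)) (p - 1) +
  sum1 (fun n => sum1 (fun m =>
    (cotq q n * cotq p m - 1) * g (cotq q n) (cotq p m)) (p - 1)) (q - 1).
Proof.
  intros Hg Hp Hq Hfg.
  assert (Hg' : Z.gcd (Z.of_nat q) (Z.of_nat p) = 1%Z) by (rewrite Z.gcd_comm; exact Hg).
  rewrite (cot_sum_split p q f Hg Hp), (cot_sum_split q p f Hg' Hq).
  rewrite (sum1_swap (fun m n => cot (PI * INR m / INR p + PI * INR n / INR q) * f (cotq p m))).
  rewrite (sum1_ext (fun n => sum1 (fun m => _ * g _ _) _) (fun n => sum1 (fun m =>
      cot (PI * INR n / INR q + PI * INR m / INR p) * f (cotq q n) +
      cot (PI * INR m / INR p + PI * INR n / INR q) * f (cotq p m)) (p - 1))).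
  2:{ intros n Hn. apply sum1_ext; intros m Hm.
      rewrite (Rplus_comm (PI * INR m / INR p)), <- Rmult_plus_distr_l, Hfg, <- Rmult_assoc.
      unfold cotq. rewrite cot_add; [reflexivity | ..].
      - apply sin_PI_div_lt_neq0; lia.
      - apply sin_PI_div_lt_neq0; lia.
      - apply sin_PI_div_add_neq0; [exact Hg | lia | lia]. }
  rewrite sum1_sum1_plus. ring.
Qed.

(* [x ^ 1] rather than [x], so that [x * f x] is convertible to [x ^ 2]. *)
Lemma cot_sum_reciprocity_1 p q : Z.gcd (Z.of_nat p) (Z.of_nat q) = 1%Z ->
  (1 <= p)%nat -> (1 <= q)%nat ->
  INR p * cot_sum p q (fun x => x ^ 1) + INR q * cot_sum q p (fun x => x ^ 1) =
  cot_power_sum q 2 + cot_power_sum p 2 - INR (q - 1) * INR (p - 1).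
Proof.
  intros Hg Hp Hq.
  rewrite (cot_sum_reciprocity p q _ (fun _ _ => 1)) by (auto; intros; ring).
  rewrite (sum1_ext (fun n => sum1 _ _) (fun n => sum1 (fun m =>
      cotq q n ^ 1 * cotq p m ^ 1 + (-1) * 1) (p - 1)))
    by (intros; apply sum1_ext; intros; ring).
  rewrite sum1_sum1_plus, !sum1_sum1_mul, !sum1_const.
  change (fun n => cotq q n * cotq q n ^ 1) with (fun n => cotq q n ^ 2).
  change (fun n => cotq p n * cotq p n ^ 1) with (fun n => cotq p n ^ 2).
  fold (cot_power_sum q 1) (cot_power_sum q 2) (cot_power_sum p 1) (cot_power_sum p 2).
  rewrite (cot_power_sum_odd q 1), (cot_power_sum_odd p 1) by (exists 0%nat; reflexivity).
  ring.
Qed.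

Lemma cot_sum_reciprocity_3 p q : Z.gcd (Z.of_nat p) (Z.of_nat q) = 1%Z ->
  (1 <= p)%nat -> (1 <= q)%nat ->
  INR p * cot_sum p q (fun x => x ^ 3) + INR q * cot_sum q p (fun x => x ^ 3) =
  cot_power_sum q 4 + cot_power_sum p 4 - cot_power_sum q 2 * cot_power_sum p 2
  - INR (p - 1) * cot_power_sum q 2 - INR (q - 1) * cot_power_sum p 2.
Proof.
  intros Hg Hp Hq.
  rewrite (cot_sum_reciprocity p q _ (fun x y => x ^ 2 - x * y + y ^ 2)) by (auto; intros; ring).
  rewrite (sum1_ext (fun n => sum1 _ _) (fun n => sum1 (fun m =>
      cotq q n ^ 3 * cotq p m ^ 1 + (-1 * cotq q n ^ 2) * cotq p m ^ 2
      + cotq q n ^ 1 * cotq p m ^ 3 + (-1 * cotq q n ^ 2) * 1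
      + cotq q n ^ 1 * cotq p m ^ 1 + (-1) * cotq p m ^ 2) (p - 1)))
    by (intros; apply sum1_ext; intros; ring).
  rewrite !sum1_sum1_plus, !sum1_sum1_mul, !sum1_scal, !sum1_const.
  change (fun n => cotq q n * cotq q n ^ 3) with (fun n => cotq q n ^ 4).
  change (fun n => cotq p n * cotq p n ^ 3) with (fun n => cotq p n ^ 4).
  fold (cot_power_sum q 1) (cot_power_sum q 2) (cot_power_sum q 3) (cot_power_sum q 4)
    (cot_power_sum p 1) (cot_power_sum p 2) (cot_power_sum p 3) (cot_power_sum p 4).
  rewrite (cot_power_sum_odd q 1), (cot_power_sum_odd p 1) by (exists 0%nat; reflexivity).
  rewrite (cot_power_sum_odd q 3), (cot_power_sum_odd p 3) by (exists 1%nat; reflexivity).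
  ring.
Qed.

Lemma coprime_succ q : Z.gcd (Z.of_nat (S q)) (Z.of_nat q) = 1%Z.
Proof.
  rewrite Z.gcd_comm. replace (Z.of_nat (S q)) with (1 + 1 * Z.of_nat q)%Z by lia.
  rewrite Z.gcd_add_mult_diag_r. apply Z.gcd_1_r.
Qed.

Lemma cot_sum_succ_l q k : (1 <= q)%nat ->
  cot_sum (S q) q (fun x => x ^ k) = cot_power_sum q (S k).
Proof.
  intros Hq. apply sum1_ext; intros n _. change (cotq q n ^ S k) with (cotq q n * cotq q n ^ k).
  f_equal. unfold cotq. rewrite <- (cot_add_nat_PI (PI * INR n / INR q) n). f_equal.
  rewrite S_INR. field. apply not_0_INR; lia.
Qed.

Lemma cot_sum_succ_r q k : cot_sum q (S q) (fun x => x ^ k) = - cot_power_sum (S q) (S k).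
Proof.
  unfold cot_sum, cot_power_sum.
  replace (- sum1 _ _) with (-1 * sum1 (fun n => cotq (S q) n ^ S k) (S q - 1)) by ring.
  rewrite <- sum1_scal.
  apply sum1_ext; intros m _. change (cotq (S q) m ^ S k) with (cotq (S q) m * cotq (S q) m ^ k).
  replace (PI * INR m * INR q / INR (S q)) with (- (PI * INR m / INR (S q)) + INR m * PI)
    by (rewrite S_INR; field; pose proof (pos_INR q); lra).
  rewrite cot_add_nat_PI, cot_neg. unfold cotq. ring.
Qed.

Lemma cot_power_sum_2 q : (1 <= q)%nat -> cot_power_sum q 2 = (INR q - 1) * (INR q - 2) / 3.
Proof.
  intros Hq. destruct q as [|k]; [lia|]. clear Hq. induction k as [|k IH].
  - unfold cot_power_sum. simpl. field.
  - pose proof (cot_sum_reciprocity_1 (S (S k)) (S k) (coprime_succ (S k)) ltac:(lia) ltac:(lia)) as E.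
    rewrite cot_sum_succ_l, cot_sum_succ_r, IH in E by lia.
    replace (S k - 1)%nat with k in E by lia. replace (S (S k) - 1)%nat with (S k) in E by lia.
    rewrite !S_INR in *. pose proof (pos_INR k).
    apply (Rmult_eq_reg_l (INR k + 1 + 1)); lra.
Qed.

Lemma cot_power_sum_4 q : (1 <= q)%nat ->
  cot_power_sum q 4 = (INR q - 1) * (INR q - 2) * (INR q ^ 2 + 3 * INR q - 13) / 45.
Proof.
  intros Hq. destruct q as [|k]; [lia|]. clear Hq. induction k as [|k IH].
  - unfold cot_power_sum. simpl. field.
  - pose proof (cot_sum_reciprocity_3 (S (S k)) (S k) (coprime_succ (S k)) ltac:(lia) ltac:(lia)) as E.
    rewrite cot_sum_succ_l, cot_sum_succ_r, IH, !cot_power_sum_2 in E by lia.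
    replace (S k - 1)%nat with k in E by lia. replace (S (S k) - 1)%nat with (S k) in E by lia.
    rewrite !S_INR in *. pose proof (pos_INR k).
    apply (Rmult_eq_reg_l (INR k + 1 + 1)); lra.
Qed.

Theorem mainTheorem15 (p q : nat) (hp : (2 <= p)%nat) (hq : (2 <= q)%nat)
  (hcop : Z.gcd (Z.of_nat p) (Z.of_nat q) = 1%Z) :
  INR p * sum1 (fun n => cot (PI * INR n * INR p / INR q) * (cot (PI * INR n / INR q)) ^ 3) (q - 1)
  + INR q * sum1 (fun n => cot (PI * INR n * INR q / INR p) * (cot (PI * INR n / INR p)) ^ 3) (p - 1)
  = / 45 * (INR p ^ 4 + INR q ^ 4 - 5 * INR p ^ 2 * INR q ^ 2 - 15 * INR p ^ 2
            - 15 * INR q ^ 2 + 45 * INR p * INR q - 12).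
Proof.
  transitivity (INR p * cot_sum p q (fun x => x ^ 3) + INR q * cot_sum q p (fun x => x ^ 3));
    [reflexivity|].
  rewrite cot_sum_reciprocity_3, !cot_power_sum_2, !cot_power_sum_4 by lia.
  rewrite !minus_INR by lia. simpl INR. field.
Qed.
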